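(* Let $r\geq 1$, $k\geq 3$, $1\le d\le r$, and let $I_d\subseteq\{1,\dots,r\}$ with $|I_d|=d$. Then for every $n\geq k+1$, every $m$ with $2\leq m\leq k-1$, and every $\phi\in T_{k,r}^m(I_d)$, $$\bigl|S_n^{(r)}\bigl(T_{k,r}^m(I_d);\phi\bigr)\bigr|=\prod_{j=k+1}^n\bigl(d(k-1)+(r-d)j\bigr).$$
   Context: For $n,r\ge1$, $S_n^{(r)}$ denotes the set of coloured permutations of length $n$ with $r$ colours: sequences $\phi=(\phi_1,\dots,\phi_n)$ where $\phi_i=a_i^{(c_i)}$, $(a_1,\dots,a_n)$ is a permutation of $\{1,\dots,n\}$ and each $c_i\in\{1,\dots,r\}$ is the colour of $a_i$. For $\phi=(\tau_1^{(s_1)},\dots,\tau_k^{(s_k)})\in S_k^{(r)}$ and $\psi=(\alpha_1^{(v_1)},\dots,\alpha_n^{(v_n)})\in S_n^{(r)}$, an occurrence of $\phi$ in $\psi$ is a sequence of indices $1\le i_1<\dots<i_k\le n$ such that $(\alpha_{i_1},\dots,\alpha_{i_k})$ is order-isomorphic to $(\tau_1,\dots,\tau_k)$ and $v_{i_j}=s_j$ for all $j$. $\psi$ contains $\phi$ if there is at least one occurrence, and avoids $\phi$ otherwise; $\psi$ contains $\phi$ exactly once if there is exactly one occurrence. For $I_d\subseteq\{1,\dots,r\}$ with $|I_d|=d$ and $1\le m\le k$, $T_{k,r}^m(I_d)$ is the set of all $\phi\in S_k^{(r)}$ whose first entry is $\phi_1=m^{(c)}$ for some colour $c\in I_d$.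 For $\phi\in T_{k,r}^m(I_d)$, $S_n^{(r)}(T_{k,r}^m(I_d);\phi)$ denotes the set of $\psi\in S_n^{(r)}$ that avoid every pattern in $T_{k,r}^m(I_d)\setminus\{\phi\}$ and contain $\phi$ exactly once. *)

From mathcomp Require Import all_boot all_fingroup.
Set Implicit Arguments. Unset Strict Implicit. Unset Printing Implicit Defensive.

(* A coloured permutation of length n with r colours: the underlying
   permutation (values 0..n-1, i.e. value v stands for v+1) together with a
   colouring of the positions (colour c : 'I_r stands for colour c+1).
   phi_i = (a_i)^(c_i) with a_i = psi.1 i + 1, c_i = psi.2 i + 1. *)
Definition cperm (n r : nat) : finType :=
  ({perm 'I_n} * {ffun 'I_n -> 'I_r})%type.

Definition is_occ (k n r : nat) (phi : cperm k r) (psi : cperm n r)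
    (f : {ffun 'I_k -> 'I_n}) : bool :=
  [&& [forall i : 'I_k, forall j : 'I_k, (i < j) ==> (f i < f j)],
      [forall i : 'I_k, forall j : 'I_k,
         (psi.1 (f i) < psi.1 (f j)) == (phi.1 i < phi.1 j)] &
      [forall i : 'I_k, psi.2 (f i) == phi.2 i]].

Definition num_occ (k n r : nat) (phi : cperm k r) (psi : cperm n r) : nat :=
  #|[pred f : {ffun 'I_k -> 'I_n} | is_occ phi psi f]|.

(* phi \in T^m_{k,r}(I): first entry is m^(c) with c \in I
   (value m is stored as m-1, position 1 is index 0). *)
Definition inT (k r m : nat) (I : {set 'I_r}) (phi : cperm k r) : bool :=
  [exists i : 'I_k, [&& val i == 0, val (phi.1 i) == m.-1 & phi.2 i \in I]].

Definition Sset (n k r m : nat) (I : {set 'I_r}) (phi : cperm k r)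
  : {set cperm n r} :=
  [set psi : cperm n r | (num_occ phi psi == 1) &&
     [forall phi' : cperm k r,
        (inT m I phi' && (phi' != phi)) ==> (num_occ phi' psi == 0)]].

(* Encode a coloured permutation psi by its Lehmer code and its colours: position i
   carries the number of later entries smaller than psi_i, a value in [0, n-i], and this
   encoding is a bijection onto the product of the sets [0, n-i] x [r].
   A pattern of T^m_{k,r}(I) occurs starting at position i iff the colour of psi_i lies
   in I and psi_i has at least m-1 smaller and k-m larger entries after it; if either
   inequality is strict, there are two such occurrences. Hence psi lies in
   S_n(T; phi) iff its only occurrence is on the last k positions, whose codes and
   colours are then those of phi, while every earlier position i has either a colour
   outside I (any of the n-i+1 codes) or a code c with c < m-1 or n-i-c < k-m
   (k-1 codes). Position i thus contributes d(k-1) + (r-d)(n-i+1) choices. *)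

From mathcomp Require Import all_boot all_fingroup zify.
Set Implicit Arguments. Unset Strict Implicit. Unset Printing Implicit Defensive.

Lemma card_ord_lt N x : x <= N -> #|[set j : 'I_N | j < x]| = x.
Proof.
move=> le_xN; have widen_inj : injective (widen_ord le_xN).
  by move=> a b /(congr1 val) ab; apply: val_inj.
rewrite -[RHS]card_ord -cardsT -(card_imset _ widen_inj).
apply: eq_card => j; rewrite inE; apply/idP/imsetP => [lt_jx | [a _ ->]]; last exact: (ltn_ord a).
by exists (Ordinal lt_jx) => //; apply: val_inj.
Qed.

Lemma card_ord_itv N lo hi : lo <= hi <= N ->
  #|[set j : 'I_N | lo <= j < hi]| = hi - lo.
Proof.
case/andP=> le_lo_hi le_hi_N.
rewrite -{2}(card_ord_lt le_hi_N) -(cardsID [set j : 'I_N | j < lo] [set j : 'I_N | j < hi]).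
have -> : [set j : 'I_N | j < hi] :&: [set j : 'I_N | j < lo] = [set j : 'I_N | j < lo].
  apply/setP => j; rewrite !inE andb_idl // => lt_jlo.
  exact: leq_trans lt_jlo le_lo_hi.
rewrite (card_ord_lt (leq_trans le_lo_hi le_hi_N)) addKn.
by apply: eq_card => j; rewrite !inE -leqNgt andbC.
Qed.

Lemma card_ord_gt N x : x < N -> #|[set j : 'I_N | x < j]| = N - x.+1.
Proof.
move=> lt_xN; rewrite -(@card_ord_itv N) ?lt_xN ?leqnn //.
by apply: eq_card => j; rewrite !inE ltn_ord andbT.
Qed.

Lemma card_ord_ends N M p q : p + q <= M.+1 <= N ->
  #|[set a : 'I_N | (a <= M) && ((a < p) || (M - a < q))]| = p + q.
Proof.
case/andP=> le_pqM le_MN.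
have -> : [set a : 'I_N | (a <= M) && ((a < p) || (M - a < q))] =
    [set a : 'I_N | a < p] :|: [set a : 'I_N | M.+1 - q <= a < M.+1].
  by apply/setP => a; rewrite !inE; apply/idP/idP; lia.
rewrite cardsU card_ord_lt ?card_ord_itv; try lia.
suff -> : [set a : 'I_N | a < p] :&: [set a : 'I_N | M.+1 - q <= a < M.+1] = set0.
  by rewrite cards0; lia.
by apply/setP => a; rewrite !inE; apply/negP; lia.
Qed.

Section FinsetCounting.
Variable T : finType.
Implicit Types (A B S : {set T}).

Lemma cards_lt_gt A (g : T -> nat) x : injective g -> x \notin A ->
  #|[set y in A | g y < g x]| + #|[set y in A | g x < g y]| = #|A|.
Proof.
move=> g_inj xA; rewrite -(cardsID [set y | g y < g x] A); congr (_ + _).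
  by apply: eq_card => y; rewrite !inE andbC.
apply: eq_card => y; rewrite !inE andbC; case yA: (y \in A); rewrite ?andbF //.
rewrite !andbT ltn_neqAle -leqNgt andb_idl // => _.
by apply/eqP => /g_inj xy; rewrite xy yA in xA.
Qed.

Lemma exists_subset_card S j : j <= #|S| -> exists2 A : {set T}, A \subset S & #|A| = j.
Proof.
elim: j => [|j IHj] le_jS; first by exists set0; rewrite ?sub0set ?cards0.
have [A sAS cardA] := IHj (ltnW le_jS).
have /subsetPn [x xS xA] : ~~ (S \subset A).
  by apply: contraTN le_jS => /subset_leq_card; rewrite cardA -ltnNge.
by exists (x |: A); rewrite ?subUset ?sub1set ?xS ?cardsU1 ?xA ?cardA.
Qed.

Lemma card_eq_of_subsets_eq S j : 0 < j <= #|S| ->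
  (forall A1 A2, A1 \subset S -> A2 \subset S -> #|A1| = j -> #|A2| = j -> A1 = A2) ->
  #|S| = j.
Proof.
case/andP=> j_gt0 le_jS uniqA; apply/eqP; rewrite eqn_leq le_jS andbT leqNgt.
apply/negP => lt_jS; have [A sAS cardA] := exists_subset_card (ltnW lt_jS).
have /subsetPn [x xS xA] : ~~ (S \subset A).
  by apply: contraTN lt_jS => /subset_leq_card; rewrite cardA -leqNgt.
have /set0Pn [y yA] : A != set0 by rewrite -card_gt0 cardA.
have sA'S : x |: A :\ y \subset S.
  by rewrite subUset sub1set xS (subset_trans (subD1set A y)).
have cardA' : #|x |: A :\ y| = j.
  by rewrite cardsU1 in_setD1 (negbTE xA) andbF -cardA [RHS](cardsD1 y A) yA.
by have := setU11 x (A :\ y); rewrite (uniqA _ _ sA'S sAS cardA' cardA) (negbTE xA).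
Qed.

Lemma setU_disjoint_cancel S A1 A2 B : A1 \subset S -> A2 \subset S ->
  [disjoint B & S] -> A1 :|: B = A2 :|: B -> A1 = A2.
Proof.
move=> sA1S sA2S; rewrite -setI_eq0 => /eqP BS0 eqAB.
by rewrite -(setIidPl sA1S) -(setIidPl sA2S) -[A1 :&: S]setU0 -[A2 :&: S]setU0 -BS0 -!setIUl eqAB.
Qed.

End FinsetCounting.

Lemma leq_card_injin (aT rT : finType) (f : aT -> rT) (A : {set aT}) (B : {set rT}) :
  injective f -> {in A, forall x, f x \in B} -> #|A| <= #|B|.
Proof.
move=> f_inj fAB; rewrite -(card_imset _ f_inj); apply: subset_leq_card.
by apply/subsetP => _ /imsetP [x Ax ->]; apply: fAB.
Qed.

Lemma card_preim_img (aT rT : finType) (f : aT -> rT) (P : pred rT) :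
  injective f -> #|[set x | P (f x)]| = #|[set y in f @: setT | P y]|.
Proof.
move=> f_inj; rewrite -(card_imset _ f_inj); apply: eq_card => y; rewrite inE.
apply/imsetP/andP => [[x Px ->] | [/imsetP [x _ ->] Pfx]]; last by exists x; rewrite ?inE.
by rewrite inE in Px; rewrite imset_f.
Qed.

Lemma card_pairs (aT bT : finType) (P : aT -> bT -> bool) :
  #|[set x : aT * bT | P x.1 x.2]| = \sum_(b : bT) #|[set a | P a b]|.
Proof.
rewrite -sum1_card big_mkcond /=.
rewrite (eq_bigr (fun x => if P x.1 x.2 then 1 else 0)); last by move=> x _; rewrite inE.
rewrite -(pair_bigA _ (fun a b => if P a b then 1 else 0)) exchange_big /=.
apply: eq_bigr => b _; rewrite -sum1_card [RHS]big_mkcond.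
by apply: eq_bigr => a _; rewrite inE.
Qed.

Lemma sum_if_mem (T : finType) (I : {set T}) (a b : nat) :
  \sum_(c : T) (if c \in I then a else b) = #|I| * a + #|~: I| * b.
Proof.
rewrite (bigID (mem I)) /= -!sum_nat_const; congr (_ + _).
  by apply: eq_big => c // ->.
by apply: eq_big => [c | c /negbTE ->]; rewrite ?inE.
Qed.

Lemma card_family_set (aT rT : finType) (F : aT -> {set rT}) :
  #|[set x | x \in family F]| = \prod_(a : aT) #|F a|.
Proof. by rewrite cardsE card_family foldrE big_map big_enum. Qed.

Lemma prod_ord_prefix_rev N L (F : nat -> nat) : L <= N ->
  \prod_(i < N) (if i < L then F (N - i) else 1) = \prod_((N - L).+1 <= j < N.+1) F j.
Proof.
move=> le_LN; rewrite -(big_mkord xpredT (fun i => if i < L then F (N - i) else 1)).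
rewrite (big_cat_nat _ (n := L)) //= [X in _ * X]big_nat_cond [X in _ * X]big1 ?muln1; last first.
  by move=> i /andP [/andP [le_Li _] _]; rewrite ltnNge le_Li.
rewrite (eq_big_nat _ _ (F2 := fun i => F (N - i))); last by move=> i /andP [_ ->].
rewrite big_nat_rev /= add0n -{1}(add0n (N - L).+1) big_addn.
by rewrite subSS subKn //; apply: eq_big_nat => i /andP [_ lt_i]; congr F; lia.
Qed.

(** * Lehmer codes *)

Section LehmerCode.
Variable N : nat.
Implicit Types (p q : {perm 'I_N}) (i : 'I_N).

Definition later_below p i := [set j : 'I_N | i < j & p j < p i].
Definition later_above p i := [set j : 'I_N | i < j & p i < p j].
Definition lehmer p i := #|later_below p i|.
Definition colehmer p i := #|later_above p i|.

Lemma card_perm_lt p i : #|[set j | p j < p i]| = p i.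
Proof.
have -> : [set j | p j < p i] = p @^-1: [set v : 'I_N | v < p i].
  by apply/setP => j; rewrite !inE.
by rewrite card_preimset ?card_ord_lt //; [apply: ltnW | apply: perm_inj].
Qed.

Lemma lehmer_add_colehmer p i : lehmer p i + colehmer p i = N - i.+1.
Proof.
have pv_inj : injective (fun j => val (p j)) by move=> a b /val_inj /perm_inj.
rewrite -card_ord_gt // -(cards_lt_gt (A := [set j : 'I_N | i < j]) (x := i) pv_inj) ?inE ?ltnn //.
by congr (_ + _); apply: eq_card => j; rewrite !inE.
Qed.

Lemma lehmer_lt p i : lehmer p i < N.
Proof. have := lehmer_add_colehmer p i; have := ltn_ord i; lia. Qed.

Lemma disjoint_later p i : [disjoint later_above p i & later_below p i].
Proof. by rewrite -setI_eq0; apply/eqP/setP => j; rewrite !inE; apply/negP; lia. Qed.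

Lemma rank_in_inj (S : {set 'I_N}) a b : a \in S -> b \in S ->
  #|[set v in S | v < a]| = #|[set v in S | v < b]| -> a = b.
Proof.
have rank_lt (c d : 'I_N) : c \in S -> c < d ->
    #|[set v in S | v < c]| < #|[set v in S | v < d]|.
  move=> cS lt_cd; apply: proper_card; apply/properP; split.
    by apply/subsetP => v; rewrite !inE => /andP [-> lt_vc]; apply: ltn_trans lt_vc lt_cd.
  by exists c; rewrite !inE ?cS ?lt_cd ?ltnn.
move=> aS bS eq_ab; apply: val_inj; case: (ltngtP a b) => // [lt_ab | lt_ba].
  by have := rank_lt _ _ aS lt_ab; rewrite eq_ab ltnn.
by have := rank_lt _ _ bS lt_ba; rewrite eq_ab ltnn.
Qed.

Lemma lehmer_rank p i :
  lehmer p i = #|[set v in [set v | i <= (p^-1)%g v] | v < p i]|.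
Proof.
rewrite /lehmer -(card_preimset _ (@perm_inj _ p)); apply: eq_card => j.
rewrite !inE permK; case: ltngtP => // eq_ij.
by rewrite (val_inj eq_ij) ltnn andbF.
Qed.

Lemma perm_tail_eq p q i : (forall j : 'I_N, j < i -> p j = q j) ->
  [set v | i <= (p^-1)%g v] = [set v | i <= (q^-1)%g v].
Proof.
have sub_tail p' q' : (forall j : 'I_N, j < i -> p' j = q' j) ->
    [set v | i <= (q'^-1)%g v] \subset [set v | i <= (p'^-1)%g v].
  move=> pq; apply/subsetP => v; rewrite !inE; apply: contraLR; rewrite -!ltnNge => lt_vi.
  by rewrite -{1}[v](permKV p') pq // permK.
by move=> pq; apply/eqP; rewrite eqEsubset !sub_tail // => j /pq ->.
Qed.

Lemma lehmer_inj p q : (forall i, lehmer p i = lehmer q i) -> p = q.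
Proof.
move=> eq_pq; suff agree t : forall i : 'I_N, i < t -> p i = q i.
  by apply/permP => i; apply: (agree i.+1).
elim: t => [// | t IHt] i; rewrite ltnS leq_eqVlt => /predU1P [it | ]; last exact: IHt.
have tail_eq : [set v | i <= (p^-1)%g v] = [set v | i <= (q^-1)%g v].
  by apply: perm_tail_eq => j lt_ji; apply: IHt; rewrite -it.
apply: (rank_in_inj (S := [set v | i <= (p^-1)%g v])).
- by rewrite inE permK.
- by rewrite tail_eq inE permK.
- by rewrite -lehmer_rank eq_pq lehmer_rank tail_eq.
Qed.

End LehmerCode.

Section Standardization.
Variables (K : nat) (g : 'I_K -> nat).
Hypothesis g_inj : injective g.

Let rank i := #|[set j | g j < g i]|.

Let rank_lt i j : (rank i < rank j) = (g i < g j).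
Proof.
case: (ltnP (g i) (g j)) => [lt_ij | le_ji].
  apply: proper_card; apply/properP; split.
    by apply/subsetP => l; rewrite !inE => /ltn_trans; apply.
  by exists i; rewrite !inE ?ltnn.
apply/negbTE; rewrite -leqNgt; apply: subset_leq_card; apply/subsetP => l.
by rewrite !inE => /leq_trans; apply.
Qed.

Let rank_ltK i : rank i < K.
Proof.
rewrite -[X in _ < X]card_ord; apply: proper_card; apply/properP.
by split; [apply: subset_predT | exists i; rewrite ?inE ?ltnn].
Qed.

Lemma exists_perm_order : exists p : {perm 'I_K}, forall i j, (p i < p j) = (g i < g j).
Proof.
pose f := [ffun i => Ordinal (rank_ltK i)].
have f_inj : injective f.
  move=> i j; rewrite !ffunE => -[eq_ij]; apply: g_inj.
  by case: (ltngtP (g i) (g j)) => // lt; move: lt; rewrite -rank_lt eq_ij ltnn.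
by exists (perm f_inj) => i j; rewrite !permE !ffunE -rank_lt.
Qed.

End Standardization.

Lemma card_cperm N r : #|cperm N r| = N`! * r ^ N.
Proof. by rewrite card_prod card_Sn card_ffun !card_ord. Qed.

Section LehmerEncoding.
Variables N r : nat.

Definition encode (psi : cperm N r) : {ffun 'I_N -> 'I_N * 'I_r} :=
  [ffun i => (Ordinal (lehmer_lt psi.1 i), psi.2 i)].

Lemma encode_lehmer psi i : (encode psi i).1 = lehmer psi.1 i :> nat.
Proof. by rewrite ffunE. Qed.

Lemma encode_colour psi i : (encode psi i).2 = psi.2 i.
Proof. by rewrite ffunE. Qed.

Lemma encode_inj : injective encode.
Proof.
move=> [p c] [q c'] eq_enc; congr pair.
  by apply: lehmer_inj => i; rewrite -(encode_lehmer (p, c)) eq_enc encode_lehmer.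
by apply/ffunP => i; rewrite -(encode_colour (p, c)) eq_enc encode_colour.
Qed.

Definition code_range (i : 'I_N) : {set 'I_N * 'I_r} := [set x : 'I_N * 'I_r | x.1 < N - i].

Lemma card_code_range i : #|code_range i| = (N - i) * r.
Proof.
have -> : code_range i = setX [set a : 'I_N | a < N - i] [set: 'I_r].
  by apply/setP => -[a c]; rewrite !inE andbT.
by rewrite cardsX card_ord_lt ?leq_subr // cardsT card_ord.
Qed.

Lemma encode_range psi : encode psi \in family code_range.
Proof.
apply/familyP => i; rewrite inE encode_lehmer.
by have := lehmer_add_colehmer psi.1 i; have := ltn_ord i; lia.
Qed.

Lemma encode_onto : encode @: setT = [set x | x \in family code_range].
Proof.
apply/eqP; rewrite eqEcard; apply/andP; split.
  by apply/subsetP => _ /imsetP [psi _ ->]; rewrite inE encode_range.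
rewrite card_imset ?cardsT ?card_cperm; last exact: encode_inj.
rewrite card_family_set (eq_bigr _ (fun i _ => card_code_range i)) big_split /=.
rewrite -ffactnn ffact_prod prod_nat_const card_ord.
by apply: eq_leq; congr (_ * _); apply: eq_bigr => i _; rewrite subn0.
Qed.

End LehmerEncoding.

(** * Increasing maps and occurrences *)

Section IncreasingMaps.
Variables K N : nat.
Implicit Types (f : {ffun 'I_K -> 'I_N}) (i j : 'I_K).

Definition incr f : bool := [forall i : 'I_K, forall j : 'I_K, (i < j) ==> (f i < f j)].

Lemma incr_ltn f i j : incr f -> (f i < f j) = (i < j).
Proof.
have incrP i' j' : incr f -> i' < j' -> f i' < f j'.
  by move=> /forallP /(_ i') /forallP /(_ j') /implyP.
move=> f_incr; case: (ltngtP i j) => [lt_ij | lt_ji | /val_inj ->]; last exact: ltnn.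
- exact: incrP.
- by apply/negbTE; rewrite -leqNgt ltnW ?incrP.
Qed.

Lemma incr_leq f i j : incr f -> (f i <= f j) = (i <= j).
Proof. by move=> f_incr; rewrite [LHS]leqNgt incr_ltn // -leqNgt. Qed.

Lemma incr_inj f : incr f -> injective f.
Proof.
move=> f_incr i j fij; apply/val_inj/eqP.
by rewrite eqn_leq -!(incr_leq _ _ f_incr) fij leqnn.
Qed.

Lemma incr_gap f i j : incr f -> i <= j -> f i + (j - i) <= f j.
Proof.
move=> f_incr le_ij; have le_fij : f i <= f j by rewrite incr_leq.
have : #|[set t : 'I_K | i <= t < j.+1]| <= #|[set v : 'I_N | f i <= v < (f j).+1]|.
  apply: (leq_card_injin (incr_inj f_incr)) => t; rewrite !inE !ltnS.
  by case/andP=> le_it le_tj; rewrite !incr_leq ?le_it.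
rewrite !card_ord_itv ?ltn_ord ?leqW ?le_ij //; lia.
Qed.

End IncreasingMaps.

Lemma ord_ltn_trans N : transitive (relpre (val : 'I_N -> nat) ltn).
Proof. by move=> y x z; apply: ltn_trans. Qed.

Lemma sorted_enum_set N (C : {set 'I_N}) : sorted (relpre val ltn) (enum C).
Proof.
have : sorted ltn (map val (enum 'I_N)) by rewrite val_enum_ord iota_ltn_sorted.
by rewrite sorted_map enumT => /(sorted_filter (@ord_ltn_trans N) (mem C)).
Qed.

Lemma exists_incr_onto K N (C : {set 'I_N}) : #|C| = K.+1 ->
  exists2 f : {ffun 'I_K.+1 -> 'I_N}, incr f & f @: setT = C.
Proof.
move=> cardC; have /set0Pn [x0 _] : C != set0 by rewrite -card_gt0 cardC.
have size_enum : size (enum C) = K.+1 by rewrite -cardE.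
pose f := [ffun t : 'I_K.+1 => nth x0 (enum C) t].
exists f.
  apply/forallP => i; apply/forallP => j; apply/implyP => lt_ij; rewrite !ffunE.
  by apply: (sorted_ltn_nth (@ord_ltn_trans N) x0 (sorted_enum_set C)); rewrite ?inE ?size_enum.
apply/setP => x; apply/imsetP/idP => [[t _ ->] | Cx].
  by rewrite ffunE -mem_enum mem_nth ?size_enum.
have lt_idx : index x (enum C) < K.+1 by rewrite -size_enum index_mem mem_enum.
by exists (Ordinal lt_idx); rewrite ?ffunE ?nth_index ?mem_enum.
Qed.

Lemma is_occP K N r (ph : cperm K r) (psi : cperm N r) f :
  reflect [/\ incr f, forall i j, (psi.1 (f i) < psi.1 (f j)) = (ph.1 i < ph.1 j)
            & forall i, psi.2 (f i) = ph.2 i]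
          (is_occ ph psi f).
Proof.
apply: (iffP and3P) => [[f_incr /forallP ord /forallP col] | [f_incr ord col]].
  by split=> // [i j | i]; [move: (ord i) => /forallP /(_ j) /eqP | apply/eqP].
by split=> //; apply/forallP => i; [apply/forallP => j; rewrite ord | rewrite col].
Qed.

Lemma is_occ_pattern_uniq K N r (ph1 ph2 : cperm K r) (psi : cperm N r) f :
  is_occ ph1 psi f -> is_occ ph2 psi f -> ph1 = ph2.
Proof.
case: ph1 ph2 => [p1 c1] [p2 c2] /is_occP [_ ord1 col1] /is_occP [_ ord2 col2] /=.
congr pair; last by apply/ffunP => i; rewrite -col1 col2.
by apply: lehmer_inj => i; apply: eq_card => j; rewrite !inE -ord1 ord2.
Qed.

Lemma inTE K r m (I : {set 'I_r}) (ph : cperm K.+1 r) :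
  inT m I ph = (ph.1 ord0 == m.-1 :> nat) && (ph.2 ord0 \in I).
Proof.
apply/existsP/andP => [[i /and3P [/eqP i0 ph_i Ii]] | [ph0 I0]].
  by have -> : ord0 = i by apply: val_inj.
by exists ord0; rewrite eqxx ph0.
Qed.

(** * Counting S_n(T; phi) *)

(* The pattern has length k.+1 and the permutations have length n.+1. *)
Section Characterization.
Variables (n k r m : nat) (I : {set 'I_r}) (phi : cperm k.+1 r).
Hypotheses (m_ge2 : 2 <= m) (m_lek : m <= k) (lt_kn : k < n) (phiT : inT m I phi).
Implicit Types (psi : cperm n.+1 r) (f : {ffun 'I_k.+1 -> 'I_n.+1}) (i : 'I_n.+1) (t : 'I_k.+1).

(* The occurrences of some pattern of T^m_{k,r}(I), described without the pattern. *)
Definition occT psi : {set {ffun 'I_k.+1 -> 'I_n.+1}} :=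
  [set f | [&& incr f, psi.2 (f ord0) \in I &
              #|[set t | psi.1 (f t) < psi.1 (f ord0)]| == m.-1]].

Lemma occT_inT (ph : cperm k.+1 r) psi f :
  inT m I ph -> is_occ ph psi f -> f \in occT psi.
Proof.
rewrite inTE => /andP [/eqP ph0 I0] /is_occP [f_incr ord col].
rewrite inE f_incr col I0 -ph0 -(card_perm_lt ph.1 ord0) /=.
by apply/eqP; apply: eq_card => t; rewrite !inE ord.
Qed.

Lemma occT_pattern psi f : f \in occT psi -> exists2 ph, inT m I ph & is_occ ph psi f.
Proof.
rewrite inE => /and3P [f_incr If /eqP card_below].
have fv_inj : injective (fun t => psi.1 (f t) : nat).
  by move=> a b /val_inj /perm_inj /(incr_inj f_incr).
have [p ord_p] := exists_perm_order fv_inj.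
exists (p, [ffun t => psi.2 (f t)]).
  rewrite inTE /= ffunE If andbT -card_perm_lt -card_below.
  by apply/eqP; apply: eq_card => t; rewrite !inE ord_p.
by apply/is_occP; split=> // *; rewrite ?ord_p ?ffunE.
Qed.

Lemma SsetP psi : reflect (exists2 f, occT psi = [set f] & is_occ phi psi f)
                          (psi \in Sset n.+1 m I phi).
Proof.
rewrite inE /num_occ; apply: (iffP andP) => [[/eqP one_occ /forallP no_other] | [f occ_f phi_f]].
  have occT_phi g : (g \in occT psi) = is_occ phi psi g.
    apply/idP/idP => [/occT_pattern [ph phT ph_g] | /(occT_inT phiT) //].
    have [<- // | ne] := eqVneq ph phi.
    by move: (no_other ph); rewrite phT ne => /eqP /card0_eq /(_ g); rewrite inE ph_g.
  have /cards1P [f occ_f] : #|occT psi| == 1.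
    by rewrite -one_occ; apply/eqP; apply: eq_card => g; rewrite occT_phi.
  by exists f; rewrite // -occT_phi occ_f set11.
split.
  rewrite -(cards1 f) -occ_f; apply/eqP; apply: eq_card => g; rewrite inE /=.
  by apply/idP/idP => [/(occT_inT phiT) // | ]; rewrite occ_f => /set1P ->.
apply/forallP => ph; apply/implyP => /andP [phT ne]; apply/eqP; apply: eq_card0 => g.
rewrite inE; apply/negP => ph_g.
have := occT_inT phT ph_g; rewrite occ_f => /set1P gf; rewrite gf in ph_g.
by rewrite (is_occ_pattern_uniq ph_g phi_f) eqxx in ne.
Qed.

(* The positions of the unique occurrence of an element of Sset. *)
Definition window : {ffun 'I_k.+1 -> 'I_n.+1} := [ffun t : 'I_k.+1 => inord (n - k + t)].

Lemma val_window t : window t = n - k + t :> nat.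
Proof. by rewrite ffunE inordK //; have := ltn_ord t; lia. Qed.

Lemma window_incr : incr window.
Proof.
by apply/forallP => i; apply/forallP => j; apply/implyP => lt_ij; rewrite !val_window; lia.
Qed.

Lemma window_onto i : n - k <= i -> exists t, window t = i.
Proof.
move=> le_i; have lt_t : i - (n - k) < k.+1 by have := ltn_ord i; lia.
by exists (Ordinal lt_t); apply: val_inj; rewrite /= val_window /=; lia.
Qed.

Lemma incr_eq_window f : incr f -> f ord0 = n - k :> nat -> f = window.
Proof.
move=> f_incr f0; apply/ffunP => t; apply: val_inj; rewrite /= val_window.
have := incr_gap (i := ord0) (j := t) f_incr (leq0n t).
have := incr_gap (i := t) (j := ord_max) f_incr (leq_ord t).
by have := ltn_ord (f ord_max); rewrite /= f0; lia.
Qed.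

Lemma lehmer_window psi t :
  lehmer psi.1 (window t) = #|[set u : 'I_k.+1 | t < u & psi.1 (window u) < psi.1 (window t)]|.
Proof.
rewrite /lehmer -(card_imset _ (incr_inj window_incr)); apply: eq_card => j.
rewrite inE; apply/andP/imsetP => [[lt_tj below] | [u /[!inE] /andP [lt_tu below] ->]].
  have [u wu] : exists u, window u = j by apply: window_onto; move: lt_tj; rewrite val_window; lia.
  exists u; last by rewrite wu.
  by rewrite inE -(incr_ltn _ _ window_incr) wu lt_tj below.
by rewrite incr_ltn ?window_incr.
Qed.

Lemma occT_start psi f : f \in occT psi ->
  [/\ psi.2 (f ord0) \in I, m.-1 <= lehmer psi.1 (f ord0),
      k.+1 - m <= colehmer psi.1 (f ord0) & f ord0 <= n - k].
Proof.
rewrite inE => /and3P [f_incr If /eqP card_below].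
have fv_inj : injective (fun t => psi.1 (f t) : nat).
  by move=> a b /val_inj /perm_inj /(incr_inj f_incr).
have after_start Q :
    #|[set t : 'I_k.+1 | 0 < t & Q (f t)]| <= #|[set j : 'I_n.+1 | f ord0 < j & Q j]|.
  apply: (leq_card_injin (incr_inj f_incr)) => t; rewrite !inE.
  by case/andP=> pos_t Qt; rewrite incr_ltn // Qt andbT.
have := cards_lt_gt (A := [set t : 'I_k.+1 | 0 < t]) (x := ord0) fv_inj.
rewrite inE ltnn card_ord_gt // subSS subn0 => /(_ isT) card_split.
have below_pos : [set t in [set t : 'I_k.+1 | 0 < t] | psi.1 (f t) < psi.1 (f ord0)] =
                 [set t | psi.1 (f t) < psi.1 (f ord0)].
  apply/setP => t; rewrite !inE; case: (posnP t) => [t0 | //].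
  by rewrite (_ : t = ord0) ?ltnn //; apply: val_inj.
rewrite below_pos card_below in card_split; split=> //.
- rewrite -card_below -below_pos.
  apply: leq_trans (after_start (fun j => psi.1 j < psi.1 (f ord0))).
  by apply: eq_leq; apply: eq_card => t; rewrite !inE.
- have above := after_start (fun j => psi.1 (f ord0) < psi.1 j).
  have : #|[set t in [set t : 'I_k.+1 | 0 < t] | psi.1 (f ord0) < psi.1 (f t)]|
           <= colehmer psi.1 (f ord0).
    by apply: leq_trans above; apply: eq_leq; apply: eq_card => t; rewrite !inE.
  lia.
- have := incr_gap (i := ord0) (j := ord_max) f_incr (leq0n _).
  by have := ltn_ord (f ord_max); rewrite /=; lia.
Qed.

(* A and B are the later entries below, resp. above, psi_i of an occurrence starting at i. *)
Definition occ_frame psi i (A B : {set 'I_n.+1}) :=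
  [&& A \subset later_below psi.1 i, B \subset later_above psi.1 i,
      #|A| == m.-1 & #|B| == k.+1 - m].

Lemma occ_frame_later psi i A B x : occ_frame psi i A B -> x \in A :|: B -> i < x.
Proof.
case/and4P=> sA sB _ _; rewrite inE.
by case/orP=> [/(subsetP sA) | /(subsetP sB)]; rewrite inE => /andP [].
Qed.

Lemma occT_of_frame psi i A B : psi.2 i \in I -> occ_frame psi i A B ->
  exists2 f, f \in occT psi & f @: setT = i |: (A :|: B).
Proof.
move=> Ii frame; have later x := @occ_frame_later psi i A B x frame.
case/and4P: frame => sA sB /eqP cardA /eqP cardB.
have AB0 : A :&: B = set0.
  by apply/eqP; rewrite setI_eq0 disjoint_sym; apply: disjointW sB sA (disjoint_later _ _).
have i_notin : i \notin A :|: B by apply/negP => /later; rewrite ltnn.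
have [f f_incr imf] : exists2 f : {ffun 'I_k.+1 -> 'I_n.+1}, incr f & f @: setT = i |: (A :|: B).
  by apply: exists_incr_onto; rewrite cardsU1 i_notin cardsU AB0 cards0 cardA cardB; lia.
have f0 : f ord0 = i.
  have /imsetP [t _ ft] : i \in f @: setT by rewrite imf setU11.
  have : f ord0 \in i |: (A :|: B) by rewrite -imf imset_f.
  case/setU1P => [// | /later lt_i0].
  by have := incr_leq ord0 t f_incr; rewrite leq0n -ft leqNgt lt_i0.
exists f => //; rewrite inE f_incr f0 Ii /=.
rewrite (card_preim_img (fun x => psi.1 x < psi.1 i) (incr_inj f_incr)) imf -cardA.
apply/eqP; apply: eq_card => x; rewrite !inE.
apply/idP/idP => [/andP [] | xA].
  case/or3P=> [/eqP -> | // | /(subsetP sB)]; first by rewrite ltnn.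
  by rewrite inE => /andP [_ above] below; have := ltn_trans below above; rewrite ltnn.
by rewrite xA orbT; move: (subsetP sA x xA); rewrite inE => /andP [].
Qed.

Lemma occT_le1_frame_eq psi i A1 B1 A2 B2 : #|occT psi| <= 1 -> psi.2 i \in I ->
  occ_frame psi i A1 B1 -> occ_frame psi i A2 B2 -> A1 :|: B1 = A2 :|: B2.
Proof.
move=> le1 Ii fr1 fr2.
have [f1 occ1 im1] := occT_of_frame Ii fr1.
have [f2 occ2 im2] := occT_of_frame Ii fr2.
have notin (A B : {set 'I_n.+1}) : occ_frame psi i A B -> i \notin A :|: B.
  by move=> fr; apply/negP => /(occ_frame_later fr); rewrite ltnn.
rewrite -(setU1K (notin _ _ fr1)) -(setU1K (notin _ _ fr2)) -im1 -im2.
by rewrite (card_le1_eqP le1 _ _ occ1 occ2).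
Qed.

Lemma occT_le1_lehmer psi i : #|occT psi| <= 1 -> psi.2 i \in I ->
  m.-1 <= lehmer psi.1 i -> k.+1 - m <= colehmer psi.1 i ->
  lehmer psi.1 i = m.-1 /\ colehmer psi.1 i = k.+1 - m.
Proof.
move=> le1 Ii le_below le_above.
have [A0 sA0 cA0] := exists_subset_card le_below.
have [B0 sB0 cB0] := exists_subset_card le_above.
have frame (A B : {set 'I_n.+1}) :
    A \subset later_below psi.1 i -> B \subset later_above psi.1 i ->
    #|A| = m.-1 -> #|B| = k.+1 - m -> occ_frame psi i A B.
  by move=> sA sB cA cB; rewrite /occ_frame sA sB cA cB !eqxx.
split; apply: card_eq_of_subsets_eq.
- by rewrite le_below andbT; lia.
- move=> A1 A2 sA1 sA2 cA1 cA2; apply: (setU_disjoint_cancel sA1 sA2 (B := B0)).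
    exact: disjointWl sB0 (disjoint_later _ _).
  exact: occT_le1_frame_eq le1 Ii (frame _ _ sA1 sB0 cA1 cB0) (frame _ _ sA2 sB0 cA2 cB0).
- by rewrite le_above andbT; lia.
- move=> B1 B2 sB1 sB2 cB1 cB2; apply: (setU_disjoint_cancel sB1 sB2 (B := A0)).
    by apply: disjointWl sA0 _; rewrite disjoint_sym disjoint_later.
  rewrite ![_ :|: A0]setUC.
  exact: occT_le1_frame_eq le1 Ii (frame _ _ sA0 sB1 cA0 cB1) (frame _ _ sA0 sB2 cA0 cB2).
Qed.

(* The possible (Lehmer code, colour) pairs at position i of an element of Sset;
   for x.1 the Lehmer code, n - i - x.1 is the number of later larger entries. *)
Definition admissible i : {set 'I_n.+1 * 'I_r} :=
  if i < n - k then
    [set x : 'I_n.+1 * 'I_r | (x.1 <= n - i) &&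
       ((x.2 \in I) ==> (x.1 < m.-1) || (n - i - x.1 < k.+1 - m))]
  else
    [set x : 'I_n.+1 * 'I_r | [exists t : 'I_k.+1,
       [&& i == n - k + t :> nat, x.1 == lehmer phi.1 t :> nat & x.2 == phi.2 t]]].

Lemma encode_Sset psi : psi \in Sset n.+1 m I phi -> encode psi \in family admissible.
Proof.
case/SsetP => f occ_f phi_f.
have le1 : #|occT psi| <= 1 by rewrite occ_f cards1.
have f_occT : f \in occT psi by rewrite occ_f set11.
have [If le_below le_above le_start] := occT_start f_occT.
have [eq_below eq_above] := occT_le1_lehmer le1 If le_below le_above.
have fw : f = window.
  apply: incr_eq_window; first by case/is_occP: phi_f.
  have := lehmer_add_colehmer psi.1 (f ord0); rewrite eq_below eq_above.
  (* The copies of [f ord0] differ in their elaborated types; lia needs them identified. *)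
  by set i0 := f ord0 in le_start *; lia.
have sum_i i := lehmer_add_colehmer psi.1 i.
apply/familyP => i; rewrite /admissible; case: ifP => [lt_i | /negbT]; rewrite inE.
  rewrite encode_lehmer encode_colour; apply/andP; split; first by have := sum_i i; lia.
  apply/implyP => Ii; apply/negPn/negP; rewrite negb_or -!leqNgt => /andP [ge_below ge_above].
  have ge_above' : k.+1 - m <= colehmer psi.1 i by have := sum_i i; lia.
  have [] := occT_le1_lehmer le1 Ii ge_below ge_above'.
  by have := sum_i i; lia.
rewrite -leqNgt => /window_onto [t wt]; apply/existsP; exists t.
case/is_occP: phi_f; rewrite fw => _ ord col.
rewrite -wt val_window encode_lehmer encode_colour col lehmer_window !eqxx andbT /=.
by apply/eqP; apply: eq_card => u; rewrite !inE ord.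
Qed.

Lemma Sset_encode psi : encode psi \in family admissible -> psi \in Sset n.+1 m I phi.
Proof.
move/familyP => adm.
have tail t : lehmer psi.1 (window t) = lehmer phi.1 t /\ psi.2 (window t) = phi.2 t.
  move: (adm (window t)); rewrite /admissible val_window ltnNge leq_addr /= inE.
  case/existsP => t' /and3P [/eqP wt' /eqP lt' /eqP ct'].
  have eq_t : t' = t by apply: ord_inj; move: wt'; lia.
  by subst t'; rewrite -(encode_lehmer psi) lt' -(encode_colour psi) ct'.
have phi_w : is_occ phi psi window.
  have wv_inj : injective (fun t => val (psi.1 (window t))).
    by move=> a b /val_inj /perm_inj /(incr_inj window_incr).
  have [p ord_p] := exists_perm_order wv_inj.
  have p_phi : p = phi.1.
    apply: lehmer_inj => t; rewrite -(tail t).1 lehmer_window.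
    by apply: eq_card => u; rewrite !inE ord_p.
  apply/is_occP; split=> [| i j | t]; first exact: window_incr.
    by rewrite -p_phi ord_p.
  exact: (tail t).2.
apply/SsetP; exists window => //.
apply/setP => f; rewrite in_set1; apply/idP/eqP => [occ_f | ->]; last exact: occT_inT phiT phi_w.
have [If le_below le_above le_start] := occT_start occ_f.
apply: incr_eq_window; first by move: occ_f; rewrite inE => /andP [].
apply/eqP; rewrite eqn_leq le_start leqNgt; apply/negP => lt_start.
move: (adm (f ord0)); rewrite /admissible lt_start inE encode_lehmer encode_colour If.
have := lehmer_add_colehmer psi.1 (f ord0).
by set i0 := f ord0 in le_below le_above lt_start *; lia.
Qed.

Lemma admissible_sub_range i : admissible i \subset code_range r i.
Proof.
apply/subsetP => x; rewrite /admissible inE; case: ifP => _; rewrite inE.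
  by case/andP => le_x _; have := ltn_ord i; lia.
case/existsP => t /and3P [/eqP it /eqP xt _]; rewrite xt it.
by have := lehmer_add_colehmer phi.1 t; have := ltn_ord t; lia.
Qed.

Lemma card_Sset : #|Sset n.+1 m I phi| = \prod_(i < n.+1) #|admissible i|.
Proof.
rewrite -(card_imset _ (@encode_inj _ _)) -card_family_set; apply: eq_card => x.
rewrite inE; apply/imsetP/idP => [[psi Spsi ->] | adm_x]; first exact: encode_Sset.
have : x \in @encode n.+1 r @: setT.
  rewrite (encode_onto n.+1 r) inE; apply/familyP => i.
  exact: subsetP (admissible_sub_range i) _ (familyP adm_x i).
by case/imsetP => psi _ x_psi; exists psi; rewrite // Sset_encode -?x_psi.
Qed.

Lemma card_admissible_tail i : n - k <= i -> #|admissible i| = 1.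
Proof.
case/window_onto => t <-; have lt_code : lehmer phi.1 t < n.+1.
  by have := lehmer_lt phi.1 t; lia.
rewrite -(cards1 (Ordinal lt_code, phi.2 t)); apply: eq_card => -[a c].
rewrite /admissible val_window ltnNge leq_addr /= !inE xpair_eqE.
apply/existsP/andP => [[t' /and3P [/eqP tt' /eqP a_t' /eqP c_t']] | [/eqP a_t /eqP c_t]].
  have eq_t : t' = t by apply: ord_inj; lia.
  by subst t'; split; apply/eqP; [apply: ord_inj | ].
by exists t; rewrite a_t c_t !eqxx.
Qed.

Lemma card_admissible_head i : i < n - k ->
  #|admissible i| = #|I| * k + (r - #|I|) * (n.+1 - i).
Proof.
move=> lt_i; rewrite /admissible lt_i (card_pairs (fun (a : 'I_n.+1) (c : 'I_r) =>
  (a <= n - i) && ((c \in I) ==> (a < m.-1) || (n - i - a < k.+1 - m)))).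
rewrite (eq_bigr (fun c => if c \in I then k else n.+1 - i)) => [|c _].
  by rewrite sum_if_mem [#|~: I|]cardsCs setCK card_ord.
case: ifP => _ /=.
  transitivity #|[set a : 'I_n.+1 | (a <= n - i) && ((a < m.-1) || (n - i - a < k.+1 - m))]|.
    by apply: eq_card => a; rewrite !inE.
  by rewrite card_ord_ends; lia.
transitivity #|[set a : 'I_n.+1 | a < n.+1 - i]|; last by rewrite card_ord_lt ?leq_subr.
by apply: eq_card => a; rewrite !inE andbT; lia.
Qed.

Lemma card_Sset_prod :
  #|Sset n.+1 m I phi| = \prod_(k.+2 <= j < n.+2) (#|I| * k + (r - #|I|) * j).
Proof.
rewrite card_Sset (eq_bigr (fun i : 'I_n.+1 =>
  if i < n - k then #|I| * k + (r - #|I|) * (n.+1 - i) else 1)) => [|i _].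
  rewrite (@prod_ord_prefix_rev _ _ (fun j => #|I| * k + (r - #|I|) * j)) ?leqW ?leq_subr //.
  by rewrite (_ : (n.+1 - (n - k)).+1 = k.+2) //; lia.
case: ifP => [lt_i | /negbT]; first exact: card_admissible_head.
by rewrite -leqNgt; apply: card_admissible_tail.
Qed.

End Characterization.

Unset Implicit Arguments.

Theorem theorem3 (r k d : nat) (I : {set 'I_r}) :
  1 <= r -> 3 <= k -> 1 <= d <= r -> #|I| = d ->
  forall (n m : nat) (phi : cperm k r),
    k + 1 <= n -> 2 <= m <= k - 1 -> inT m I phi ->
    #|Sset n m I phi| = \prod_(k + 1 <= j < n + 1) (d * (k - 1) + (r - d) * j).
Proof.
move=> _ k_ge3 _ <- n m; case: k k_ge3 => // k _ phi lt_kn /andP [m_ge2 m_lt] phiT.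
case: n lt_kn => [|n] lt_kn; first by rewrite addn1 in lt_kn.
have m_lek : m <= k by rewrite subn1 in m_lt.
have {}lt_kn : k < n by rewrite !addn1 ltnS in lt_kn.
by rewrite (card_Sset_prod m_ge2 m_lek lt_kn phiT) !addn1 subn1 succnK.
Qed.
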